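(* Let $G=(V,E)$ be an unweighted undirected graph on $n$ nodes and let $D\ge 2$ be an integer. Let $R$ be a random multiset of $\lceil 2\frac{n}{D}\ln D\rceil$ elements, each chosen uniformly and independently at random from $V$. For a node $u$, call a node $v$ uncovered for $u$ if $dist_G(u,v)\ge D$ and no node of $R$ lies on any shortest path between $u$ and $v$; call $u$ sick if it has more than $\frac{n}{D}$ uncovered nodes. Let $S$ be the set of sick nodes. Then \[ \Pr\!\left[|S|\ge 2\frac{n}{D}\right]\le \frac12. \]
   Context: $dist_G(u,v)$ denotes the shortest-path distance (number of edges) in $G$. A shortest path between $u$ and $v$ includes its endpoints $u$ and $v$. *)

From HB Require Import structures.
From mathcomp Require Import all_boot all_order all_algebra.
From mathcomp Require Import boolp reals exp.
Set Implicit Arguments. Unset Strict Implicit. Unset Printing Implicit Defensive.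
Import Order.TTheory GRing.Theory Num.Theory.

Section Defs.
Variables (T : finType) (e : rel T).

(* a walk of length l from u to v: u :: p with p of size l, consecutive
   vertices adjacent, ending at v *)
Definition walk (u v : T) (p : seq T) : Prop :=
  path e u p /\ last u p = v.

Definition is_dist (u v : T) (d : nat) : Prop :=
  (exists p, walk u v p /\ size p = d) /\
  (forall p, walk u v p -> d <= size p).

(* shortest path between u and v: a walk of length dist_G(u,v); its node set
   (including both endpoints) is u :: p *)
Definition shortest_path (u v : T) (p : seq T) : Prop :=
  walk u v p /\ is_dist u v (size p).

Definition uncovered (D : nat) (R : seq T) (u v : T) : Prop :=
  exists d, is_dist u v d /\ D <= d /\
    forall p, shortest_path u v p -> forall x, x \in u :: p -> x \notin R.

Definition uncovered_set (D : nat) (R : seq T) (u : T) : {set T} :=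
  finset (fun v => `[< uncovered D R u v >]).

Definition sick {K : realType} (D : nat) (R : seq T) (u : T) : bool :=
  (#|T|%:R / D%:R < (#|uncovered_set D R u|)%:R :> K)%R.

Definition sick_set {K : realType} (D : nat) (R : seq T) : {set T} :=
  finset (fun u => sick (K:=K) D R u).

End Defs.

Definition nsamples {K : realType} (n D : nat) : nat :=
  `|Num.ceil (2 * (n%:R / D%:R) * ln (D%:R : K))%R|%N.

From HB Require Import structures.
From mathcomp Require Import all_boot all_order all_algebra.
From mathcomp Require Import boolp reals exp.
From mathcomp Require Import sequences ring.
Set Implicit Arguments. Unset Strict Implicit. Unset Printing Implicit Defensive.
Import Order.TTheory GRing.Theory Num.Theory.

(* A pair (u, v) at distance at least D has a shortest path with at least
   D + 1 nodes, so it stays uncovered for at most (n - D - 1)^k of the n^k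
   samples; with k >= 2 (n/D) ln D this is at most n^k / D^2.  Hence the total
   number of uncovered pairs, summed over all samples, is at most
   n^2 n^k / D^2, while a sample with at least 2n/D sick nodes has at least
   2 n^2 / D^2 uncovered pairs; Markov's inequality concludes. *)

Lemma card_tuple_all (T : finType) (A : {set T}) (k : nat) :
  #|[set t : k.-tuple T | all (mem A) t]| <= #|A| ^ k.
Proof.
pose f (t : k.-tuple T) : {ffun 'I_k -> T} := [ffun i => tnth t i].
have f_inj : injective f.
  by move=> t1 t2 /ffunP eq_f; apply: eq_from_tnth => i; have := eq_f i; rewrite !ffunE.
rewrite -(card_imset _ f_inj) -[k in #|A| ^ k]card_ord -card_ffun_on.
apply: subset_leq_card; apply/subsetP => g /imsetP[t]; rewrite inE => /allP At ->.
by apply/ffun_onP => i; rewrite ffunE; apply/At/mem_tnth.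
Qed.

Lemma sum_card_exchange (I J : finType) (A : I -> {set J}) :
  \sum_i #|A i| = \sum_j #|[set i | j \in A i]|.
Proof.
have card_sum (X : finType) (B : {set X}) : #|B| = \sum_x (x \in B : nat).
  by rewrite -sum1_card big_mkcond; apply: eq_bigr => x _; case: (x \in B).
under eq_bigr do rewrite card_sum.
by rewrite exchange_big; apply: eq_bigr => j _; rewrite card_sum; apply: eq_bigr => i; rewrite inE.
Qed.

Section Covering.
Variables (T : finType) (e : rel T).

Lemma is_dist_shortest_path (u v : T) (d : nat) :
  is_dist e u v d -> exists q, shortest_path e u v q /\ uniq (u :: q) /\ size q = d.
Proof.
move=> dist_d; have [[p [[e_p last_p] size_p]] min_d] := dist_d.
move: last_p; case: (shortenP e_p) => q e_q uniq_q sub_qp last_q.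
have walk_q : walk e u v q by split; rewrite ?last_q.
have size_q : size q = d.
  apply/eqP; rewrite eqn_leq min_d // andbT -size_p.
  by apply: uniq_leq_size sub_qp; move: uniq_q; rewrite cons_uniq => /andP[].
by exists q; split=> //; split; rewrite ?size_q.
Qed.

Lemma card_uncovered_samples (D k : nat) (u v : T) :
  #|[set R : k.-tuple T | v \in uncovered_set e D R u]| <= (#|T| - D.+1) ^ k.
Proof.
case: (pickP [pred R : k.-tuple T | v \in uncovered_set e D R u]) => [R0 /=|none]; last first.
  suff -> : [set R : k.-tuple T | v \in uncovered_set e D R u] = set0 by rewrite cards0.
  by apply/setP => R; have := none R; rewrite /= !inE => ->.
rewrite inE => /asboolP[d [dist_d [le_Dd _]]].
have [q [sp_q [uniq_q size_q]]] := is_dist_shortest_path dist_d.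
pose B := [set x in u :: q].
have card_B : #|B| = d.+1 by rewrite cardsE (card_uniqP uniq_q) /= size_q.
apply: (@leq_trans (#|~: B| ^ k)).
  apply: leq_trans (card_tuple_all (~: B) k); apply/subset_leq_card/subsetP => R.
  rewrite !inE => /asboolP[_ [_ [_ avoid]]]; apply/allP => x xR; rewrite !inE.
  by apply/negP => xB; have := avoid q sp_q x xB; rewrite xR.
rewrite cardsCs setCK card_B.
by case: k {R0} => [|k] //; rewrite leq_exp2r // leq_sub2l.
Qed.

Lemma sum_card_uncovered_samples (D k : nat) :
  \sum_(R : k.-tuple T) \sum_u #|uncovered_set e D R u| <=
    #|T| * #|T| * (#|T| - D.+1) ^ k.
Proof.
rewrite exchange_big -mulnA -sum_nat_const; apply: leq_sum => u _.
rewrite sum_card_exchange -sum_nat_const; apply: leq_sum => v _.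
exact: card_uncovered_samples.
Qed.

Lemma sick_set_card_uncovered (K : realType) (D : nat) (R : seq T) :
  0 < D -> (2 * (#|T|%:R / D%:R) <= #|sick_set (K:=K) e D R|%:R :> K)%R ->
  2 * #|T| * #|T| <= (\sum_u #|uncovered_set e D R u|) * D ^ 2.
Proof.
move=> D_gt0; have DR : (0 < D%:R :> K)%R by rewrite ltr0n.
rewrite mulrA ler_pdivrMr // -!natrM ler_nat => many_sick.
set s := #|sick_set e D R| in many_sick.
have sick_uncovered : s * #|T| <= (\sum_u #|uncovered_set e D R u|) * D.
  rewrite big_distrl (bigID (mem (sick_set (K:=K) e D R))) /=.
  apply: leq_trans (leq_addr _ _); rewrite /s -sum1_card big_distrl /=.
  apply: leq_sum => u; rewrite inE /sick ltr_pdivrMr // -natrM ltr_nat mul1n.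
  exact: ltnW.
apply: (@leq_trans (s * D * #|T|)); first by rewrite leq_mul2r many_sick orbT.
by rewrite mulnAC expnS expn1 mulnA leq_mul2r sick_uncovered orbT.
Qed.

End Covering.

Local Open Scope ring_scope.

Lemma ler_miss_expR (K : realType) (m n k : nat) : (0 < n)%N ->
  ((n - m)%:R / n%:R) ^+ k <= expR (- (m%:R / n%:R) * k%:R) :> K.
Proof.
move=> n_gt0; rewrite expRM_natr; apply: lerXn2r; rewrite ?nnegrE ?expR_ge0 //.
  by rewrite divr_ge0.
have nR : (0 : K) < n%:R by rewrite ltr0n.
case: (leqP m n) => [le_mn|lt_nm].
  by rewrite natrB // mulrBl divff ?gt_eqF // expR_ge1Dx.
have /eqP -> : (n - m == 0)%N by rewrite subn_eq0 ltnW.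
by rewrite mul0r expR_ge0.
Qed.

Lemma nsamples_ge (K : realType) (n D : nat) : (0 < D)%N ->
  2 * (n%:R / D%:R) * ln (D%:R : K) <= (nsamples (K:=K) n D)%:R.
Proof.
move=> D_gt0; rewrite natr_absz ger0_norm ?ceil_ge //.
rewrite ceil_ge0 (lt_le_trans (ltrN10 _)) // !mulr_ge0 ?invr_ge0 //.
by rewrite ln_ge0 // ler1n.
Qed.

Lemma nsamples_miss_le (K : realType) (n D : nat) : (0 < n)%N -> (2 <= D)%N ->
  (D ^ 2 * (n - D.+1) ^ nsamples (K:=K) n D <= n ^ nsamples (K:=K) n D)%N.
Proof.
move=> n_gt0 D_ge2; set k := nsamples n D; have D_gt0 : (0 < D)%N by apply: leq_trans D_ge2.
have nR : (0 : K) < n%:R by rewrite ltr0n.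
have DR : (0 : K) < D%:R by rewrite ltr0n.
have lnD_ge0 : 0 <= ln (D%:R : K) by rewrite ln_ge0 // ler1n.
have rate : 2 * ln (D%:R : K) <= D.+1%:R / n%:R * k%:R.
  apply: le_trans (ler_wpM2l _ (nsamples_ge K n D_gt0)); last by rewrite divr_ge0.
  have -> : D.+1%:R / n%:R * (2 * (n%:R / D%:R) * ln (D%:R : K)) =
            D.+1%:R / D%:R * (2 * ln (D%:R : K)).
    by field; rewrite !gt_eqF.
  by rewrite ler_peMl ?mulr_ge0 // ler_pdivlMr // mul1r ler_nat.
have miss : ((n - D.+1)%:R / n%:R) ^+ k <= (D%:R : K) ^- 2.
  apply: le_trans (ler_miss_expR K D.+1 k n_gt0) _.
  have -> : (D%:R : K) ^- 2 = expR (- (2 * ln D%:R)).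
    by rewrite expRN expRM_natl lnK // posrE.
  by rewrite ler_expR mulNr lerN2.
rewrite -(ler_nat K) natrM !natrX -ler_pdivlMl ?exprn_gt0 //.
by rewrite -ler_pdivrMr ?exprn_gt0 // -expr_div_n.
Qed.

Theorem lemma3 (K : realType) (T : finType) (e : rel T)
    (e_sym : symmetric e) (e_irr : irreflexive e)
    (n_gt0 : (0 < #|T|)%N) (D : nat) (hD : (2 <= D)%N) :
  let n := #|T| in
  let k := nsamples (K:=K) n D in
  (#|[set R : k.-tuple T |
       2 * (n%:R / D%:R) <= (#|sick_set (K:=K) e D R|)%:R :> K]|)%:R
    / (n ^ k)%:R <= (1 / 2 : K).
Proof.
rewrite /=; set n := #|T|; set k := nsamples n D; set S := [set R | _].
pose unc (R : k.-tuple T) := (\sum_u #|uncovered_set e D R u|)%N.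
have D_gt0 : (0 < D)%N by apply: leq_trans hD.
have card_S : (#|S| * (2 * n * n) <= n * n * n ^ k)%N.
  apply: (@leq_trans (\sum_(R in S) unc R * D ^ 2)%N).
    rewrite -sum_nat_const; apply: leq_sum => R; rewrite inE.
    exact: sick_set_card_uncovered.
  apply: (@leq_trans ((\sum_R unc R) * D ^ 2)%N).
    by rewrite big_distrl /= [X in (_ <= X)%N](bigID (mem S)) leq_addr.
  apply: leq_trans (leq_mul (sum_card_uncovered_samples e D k) (leqnn _)) _.
  rewrite mulnAC -mulnA leq_mul2l; apply/orP; right.
  exact: nsamples_miss_le.
have two_card_S : (2 * #|S| <= n ^ k)%N.
  move: card_S; rewrite [X in (_ <= X)%N]mulnC -(mulnA 2) mulnA (mulnC #|S|).
  by rewrite leq_pmul2r ?muln_gt0 ?n_gt0.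
have nkR : (0 : K) < (n ^ k)%:R by rewrite ltr0n expn_gt0 n_gt0.
rewrite ler_pdivrMr // mul1r -(ler_pM2l (ltr0Sn K 1)) mulrCA mulKf ?pnatr_eq0 //.
by rewrite -natrM ler_nat.
Qed.
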